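(* Let $D$ be an integral domain and $\star$ a semistar operation on $D$. If $D[X]$ is $\star[X]$-catenarian (i.e. $\star[X]$-catenary), then $D$ is a $\widetilde{\star}$-strong S-domain.
   Context: Let $D$ be an integral domain with quotient field $K$, $\overline{\mathcal{F}}(D)$ the set of nonzero $D$-submodules of $K$. A semistar operation on $D$ is a map $\star:\overline{\mathcal{F}}(D)\to\overline{\mathcal{F}}(D)$ with $(xE)^\star=xE^\star$ for nonzero $x\in K$, $E\subseteq F\Rightarrow E^\star\subseteq F^\star$, and $E\subseteq E^\star=(E^\star)^\star$. $E^{\star_f}:=\bigcup\{F^\star:F\subseteq E\text{ nonzero finitely generated}\}$. For a semistar operation $\ast$, a nonzero ideal $I$ is a quasi-$\ast$-ideal if $I^\ast\cap D=I$; quasi-$\ast$-primes are prime quasi-$\ast$-ideals, quasi-$\ast$-maximal ideals are maximal among proper quasi-$\ast$-ideals. $E^{\widetilde\star}:=\bigcap\{ED_P:P\in\mathrm{QMax}^{\star_f}(D)\}$. For an indeterminate $X$: $\Theta:=\{Q\in\mathrm{Spec}(D[X]):Q\cap D=(0)\text{ or }(Q\cap D)^{\star_f}\subsetneq D^\star\}$, $\mathfrak S:=D[X][Y]\setminus\bigcup\{Q[Y]:Q\in\Theta\}$, and $E^{\star[X]}:=E[Y]_{\mathfrak S}\cap K(X)$ defines a semistar operation $\star[X]$ on $D[X]$, with $\widetilde\star[X]=\star[X]$. A domain $R$ with semistar operation $\ast$ is $\ast$-catenary if for each pair $P\subset Q$ of quasi-$\ast$-primes, any two saturated chains of quasi-$\ast$-primes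 between $P$ and $Q$ have the same finite length. For a semistar operation $\ast$ on $D$, $D$ is a $\ast$-strong S-domain if each pair of adjacent quasi-$\ast$-primes $P_1\subset P_2$ of $D$ extends to adjacent quasi-$\ast[X]$-primes $P_1[X]\subset P_2[X]$ of $D[X]$. *)

From mathcomp Require Import all_boot all_algebra.
From mathcomp Require Export fraction.
Set Implicit Arguments. Unset Strict Implicit. Unset Printing Implicit Defensive.
Import GRing.Theory.
Local Open Scope ring_scope.

(* Subsets of a field F are predicates F -> Prop; a domain is a subring R of F. *)
Section Generic.
Variable F : fieldType.
Implicit Types (R E G I P Q : F -> Prop) (st : (F -> Prop) -> (F -> Prop)).

Definition subset E G := forall x, E x -> G x.
Definition psubset E G := subset E G /\ ~ subset G E.

Definition is_subring R :=
  [/\ R 1, forall x y, R x -> R y -> R (x - y) & forall x y, R x -> R y -> R (x * y)].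

Definition quotient_field_of R :=
  forall x : F, exists a b, [/\ R a, R b, b != 0 & x = a / b].

Definition submod R E :=
  [/\ E 0, forall x y, E x -> E y -> E (x + y),
      forall d x, R d -> E x -> E (d * x) & exists x, E x /\ x != 0].

Definition scale_set (x : F) E := fun y => exists e, E e /\ y = x * e.

Definition semistar R (st : (F -> Prop) -> (F -> Prop)) :=
  [/\ forall E, submod R E -> submod R (st E),
      forall (x : F) E, x != 0 -> submod R E ->
         forall y, st (scale_set x E) y <-> scale_set x (st E) y,
      forall E G, submod R E -> submod R G -> subset E G -> subset (st E) (st G),
      forall E, submod R E -> subset E (st E) &
      forall E, submod R E -> forall y, st (st E) y <-> st E y].

Definition fg_span R (l : seq F) := fun x =>
  exists d : nat -> F, (forall i, R (d i)) /\ x = \sum_(i < size l) d i * l`_i.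

Definition star_f R st E := fun x =>
  exists l : seq F, (exists y, fg_span R l y /\ y != 0) /\
    subset (fg_span R l) E /\ st (fg_span R l) x.

Definition ideal R I :=
  [/\ subset I R, I 0, forall x y, I x -> I y -> I (x + y) &
      forall d x, R d -> I x -> I (d * x)].

Definition prime_ideal R P :=
  [/\ ideal R P, ~ P 1 & forall a b, R a -> R b -> P (a * b) -> P a \/ P b].

Definition quasi_ideal R st I :=
  [/\ ideal R I, exists x, I x /\ x != 0 & forall x, (st I x /\ R x) <-> I x].

Definition quasi_prime R st P := quasi_ideal R st P /\ prime_ideal R P.

Definition quasi_max R st P :=
  [/\ quasi_ideal R st P, ~ P 1 &
      forall I, quasi_ideal R st I -> ~ I 1 -> subset P I -> subset I P].

(* E^{~star} = intersection of the E D_P, P quasi-star_f-maximal;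
   x \in E D_P  iff  s x \in E for some s \in D \ P *)
Definition tilde R st E := fun x =>
  forall P, quasi_max R (star_f R st) P -> exists s, [/\ R s, ~ P s & E (s * x)].

Definition adjacent_qprimes R st P1 P2 :=
  [/\ quasi_prime R st P1, quasi_prime R st P2, psubset P1 P2 &
      ~ exists P, [/\ quasi_prime R st P, psubset P1 P & psubset P P2]].

Definition qchain R st P Q (C : (F -> Prop) -> Prop) :=
  [/\ forall A, C A -> quasi_prime R st A /\ subset P A /\ subset A Q,
      C P, C Q & forall A B, C A -> C B -> subset A B \/ subset B A].

Definition saturated_qchain R st P Q C :=
  qchain R st P Q C /\
  forall C', qchain R st P Q C' -> (forall A, C A -> C' A) -> forall A, C' A -> C A.

(* C is finite with n+1 elements, i.e. a chain of length n *)
Definition chain_length (C : (F -> Prop) -> Prop) (n : nat) :=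
  exists l : seq (F -> Prop), [/\ size l = n.+1,
    forall i, (i < n)%N -> psubset (nth (fun _ => False) l i) (nth (fun _ => False) l i.+1) &
    forall A, C A <-> exists2 i, (i < n.+1)%N & A = nth (fun _ => False) l i].

Definition catenary R st :=
  forall P Q, quasi_prime R st P -> quasi_prime R st Q -> psubset P Q ->
  forall C1 C2, saturated_qchain R st P Q C1 -> saturated_qchain R st P Q C2 ->
  exists n, chain_length C1 n /\ chain_length C2 n.

End Generic.

Section PolyX.
Variable K : fieldType.
Notation KX := {fraction {poly K}}.
Implicit Types (D : K -> Prop) (st : (K -> Prop) -> (K -> Prop)).

(* P[X] for P a subset of K, viewed inside K(X); D[X] = extX D *)
Definition extX (P : K -> Prop) : KX -> Prop := fun z =>
  exists p : {poly K}, (forall i, P p`_i) /\ z = tofrac p.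

Definition contr D (Q : KX -> Prop) : K -> Prop := fun a => D a /\ Q (tofrac (a%:P)).

Definition Theta D (st : (K -> Prop) -> (K -> Prop)) (Q : KX -> Prop) :=
  prime_ideal (extX D) Q /\
  ((forall a, contr D Q a -> a = 0) \/
   psubset (star_f D st (contr D Q)) (st D)).

(* S = D[X][Y] \ U { Q[Y] : Q \in Theta } *)
Definition Sset D st (g : {poly KX}) :=
  (forall i, extX D g`_i) /\ forall Q, Theta D st Q -> ~ (forall i, Q g`_i).

(* E^{star[X]} = E[Y]_S \cap K(X): z = f/g with f \in E[Y], g \in S,
   i.e. g z \in E[Y] for some g \in S *)
Definition starX D st (E : KX -> Prop) : KX -> Prop := fun z =>
  exists g : {poly KX}, Sset D st g /\ forall i, E (g`_i * z).

Definition strong_S_domain D st :=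
  forall P1 P2, adjacent_qprimes D st P1 P2 ->
    adjacent_qprimes (extX D) (starX D st) (extX P1) (extX P2).

End PolyX.

(* Let P1 < P2 be adjacent quasi-~star-primes of D. A prime N of D[X] whose
   contraction lies in a proper quasi-~star-ideal belongs to Theta, hence avoids
   S and is a quasi-prime both for star[X] and for ~star[X]; this applies to
   P[X] and to P + X D[X] for every quasi-~star-prime P.
   The chain P1[X] < P1 + X D[X] < P2 + X D[X] of quasi-star[X]-primes is
   saturated: a quasi-prime between the first two either contains X or lies in
   P1[X], and one between the last two is determined by its contraction, a
   quasi-~star-prime between P1 and P2. A quasi-~star[X]-prime Q strictly
   between P1[X] and P2[X] would be a quasi-star[X]-prime, and by Zorn's lemma
   P1[X] < Q < P2[X] < P2 + X D[X] would extend to a saturated chain with at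
   least four members, contradicting star[X]-catenarity. *)

From Pilot Require Import Defs.
From mathcomp Require Import all_boot all_algebra.
From mathcomp Require boolp classical_sets.
From Stdlib Require Import Classical.
Set Implicit Arguments. Unset Strict Implicit. Unset Printing Implicit Defensive.
Import GRing.Theory.
Local Open Scope ring_scope.

Section Subring.
Variables (K : fieldType) (D : K -> Prop).
Hypothesis HD : is_subring D.

Lemma subring1 : D 1. Proof. by case: HD. Qed.

Lemma subringB x y : D x -> D y -> D (x - y). Proof. by case: HD => _ + _; apply. Qed.

Lemma subringM x y : D x -> D y -> D (x * y). Proof. by case: HD => _ _; apply. Qed.

Lemma subring0 : D 0. Proof. by rewrite -(subrr 1); apply: subringB; apply: subring1. Qed.

Lemma subringN x : D x -> D (- x).
Proof. by move=> Dx; rewrite -sub0r; apply: subringB => //; apply: subring0. Qed.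

Lemma subringD x y : D x -> D y -> D (x + y).
Proof. by move=> Dx Dy; rewrite -[y]opprK; apply: subringB => //; apply: subringN. Qed.

(* Like [submod D], but allowing the zero module. *)
Definition dmodule (E : K -> Prop) :=
  [/\ E 0, forall x y, E x -> E y -> E (x + y) & forall d x, D d -> E x -> E (d * x)].

Lemma dmodule_subring : dmodule D.
Proof. by split; [exact: subring0 | exact: subringD | exact: subringM]. Qed.

Lemma dmodule_ideal I : ideal D I -> dmodule I. Proof. by case. Qed.

Lemma dmodule_submod E : submod D E -> dmodule E. Proof. by case. Qed.

Lemma dmodule_sum E (I : Type) (r : seq I) (P : pred I) (f : I -> K) :
  dmodule E -> (forall i, P i -> E (f i)) -> E (\sum_(i <- r | P i) f i).
Proof. by case=> E0 ED _; apply: big_ind. Qed.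

Lemma dmoduleB E x y : dmodule E -> E x -> E y -> E (x - y).
Proof.
case=> _ ED EM Ex Ey; rewrite -mulN1r; apply: ED => //.
by apply: EM => //; apply: subringN; apply: subring1.
Qed.

Lemma coefM_dmodule E (p q : {poly K}) i :
  dmodule E -> (forall j, D p`_j) -> (forall j, E q`_j) -> E (p * q)`_i.
Proof.
move=> hE Dp Eq; rewrite coefM; apply: dmodule_sum => // j _.
by case: hE => _ _; apply.
Qed.

End Subring.

Lemma least_index (Q : nat -> Prop) :
  (exists n, Q n) -> exists n, Q n /\ forall m, (m < n)%N -> ~ Q m.
Proof.
move=> exQ; have /ex_minnP[n /boolp.asboolP Qn minn] : exists n, boolp.asbool (Q n).
  by case: exQ => n Qn; exists n; apply/boolp.asboolP.
by exists n; split=> // m mn Qm; have := minn m (introT (boolp.asboolP _) Qm); rewrite leqNgt mn.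
Qed.

Section PolynomialExtension.
Variables (K : fieldType) (D : K -> Prop).
Hypothesis HD : is_subring D.
Local Notation KX := {fraction {poly K}}.

Definition coef_in (E : K -> Prop) (p : {poly K}) := forall i, E p`_i.

Definition cst (a : K) : KX := tofrac a%:P.

Definition plusXD (P : K -> Prop) : KX -> Prop :=
  fun z => exists p, [/\ coef_in D p, P p`_0 & z = tofrac p].

Lemma tofrac_inj (p q : {poly K}) : tofrac p = tofrac q :> KX -> p = q.
Proof. by move/eqP; rewrite tofrac_eq => /eqP. Qed.

Lemma extX_tofrac E p : extX E (tofrac p : KX) <-> coef_in E p.
Proof. by split=> [[q [Eq /tofrac_inj ->]] | Ep] //; exists p. Qed.

Lemma plusXD_tofrac P p : plusXD P (tofrac p) <-> coef_in D p /\ P p`_0.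
Proof. by split=> [[q [Dq Pq0 /tofrac_inj ->]] | []] //; exists p. Qed.

Lemma extX_sub (E E' : K -> Prop) (z : KX) :
  (forall x, E x -> E' x) -> extX E z -> extX E' z.
Proof. by move=> EE' [p [Ep ->]]; exists p; split=> // i; apply: EE'. Qed.

Lemma extX_plusXD P : (forall x, P x -> D x) -> forall z, extX P z -> plusXD P z.
Proof. by move=> PD z [p [Pp ->]]; apply/plusXD_tofrac; split=> // i; apply: PD. Qed.

Lemma coef_inC (E : K -> Prop) a : E 0 -> E a -> coef_in E a%:P.
Proof. by move=> E0 Ea i; rewrite coefC; case: (i == 0)%N. Qed.

Lemma coef_inX : coef_in D 'X.
Proof.
by move=> i; rewrite coefX; case: (i == 1)%N; [exact: (subring1 HD) | exact: (subring0 HD)].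
Qed.

Lemma coef_in_drop (E : K -> Prop) p : coef_in E p -> coef_in E (drop_poly 1 p).
Proof. by move=> Ep i; rewrite coef_drop_poly. Qed.

Lemma coef_in_mulX p : coef_in D p -> coef_in D (p * 'X).
Proof. by move=> Dp i; rewrite coefMX; case: (i == 0)%N => //; exact: (subring0 HD). Qed.

Lemma poly_decompX (p : {poly K}) :
  (tofrac p : KX) = cst p`_0 + tofrac (drop_poly 1 p) * tofrac 'X.
Proof.
rewrite /cst -tofracM -tofracD; congr tofrac; apply/polyP => i.
rewrite coefD coefC coefMX coef_drop_poly.
by case: i => [|i] /=; [rewrite addr0 | rewrite add0r addn1].
Qed.

Lemma extX_cst (E : K -> Prop) a : E 0 -> extX E (cst a) <-> E a.
Proof.
move=> E0; rewrite extX_tofrac; split=> [/(_ 0%N)|]; first by rewrite coefC.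
exact: coef_inC.
Qed.

Lemma extX_cstD a : D a -> extX D (cst a).
Proof. by move=> Da; apply/extX_cst => //; exact: (subring0 HD). Qed.

Lemma plusXD_cst (P : K -> Prop) a : P 0 -> (forall x, P x -> D x) ->
  plusXD P (cst a) <-> P a.
Proof.
move=> P0 PD; rewrite plusXD_tofrac coefC /=; split=> [[] // | Pa].
by split=> //; apply: coef_inC; [exact: (subring0 HD) | apply: PD].
Qed.

Lemma X_plusXD (P : K -> Prop) : P 0 -> plusXD P (tofrac 'X).
Proof. by move=> P0; apply/plusXD_tofrac; split; [apply: coef_inX | rewrite coefX]. Qed.

Lemma X_notin_extX (P : K -> Prop) : ~ P 1 -> ~ extX P (tofrac 'X).
Proof. by move=> nP1 /extX_tofrac /(_ 1%N); rewrite coefX. Qed.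

Lemma tofracX_neq0 : (tofrac 'X : KX) != 0.
Proof. by rewrite tofrac_eq0 polyX_eq0. Qed.

Lemma cst_neq0 a : a != 0 -> cst a != 0.
Proof. by move=> a0; rewrite /cst tofrac_eq0 polyC_eq0. Qed.

Lemma cstM a b : cst (a * b) = cst a * cst b.
Proof. by rewrite /cst polyCM tofracM. Qed.

Lemma extX0 : extX D 0.
Proof. by rewrite -tofrac0 extX_tofrac => i; rewrite coef0; exact: (subring0 HD). Qed.

Lemma extX1 : extX D 1.
Proof.
by rewrite -tofrac1 extX_tofrac; apply: coef_inC; [exact: (subring0 HD) | exact: (subring1 HD)].
Qed.

Lemma idealB_extX (N : KX -> Prop) a b : ideal (extX D) N -> N a -> N b -> N (a - b).
Proof.
case=> _ _ ND NM Na Nb; apply: ND => //.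
rewrite -mulN1r -tofrac1 -tofracN -polyCN -/(cst _); apply: NM => //.
by apply: extX_cstD; apply: (subringN HD); exact: (subring1 HD).
Qed.

Lemma ideal_extX P : ideal D P -> ideal (extX D) (extX P).
Proof.
move=> hP; have [PD P0 PDD PM] := hP; split.
- by move=> z; apply: extX_sub.
- by rewrite -tofrac0 extX_tofrac => i; rewrite coef0.
- move=> _ _ [p [Pp ->]] [q [Pq ->]]; rewrite -tofracD extX_tofrac => i.
  by rewrite coefD; apply: PDD.
- move=> _ _ [p [Dp ->]] [q [Pq ->]]; rewrite -tofracM extX_tofrac => i.
  exact: coefM_dmodule (dmodule_ideal hP) Dp Pq.
Qed.

Lemma ideal_plusXD P : ideal D P -> ideal (extX D) (plusXD P).
Proof.
move=> [PD P0 PDD PM]; split.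
- by move=> z [p [Dp _ ->]]; apply/extX_tofrac.
- by rewrite -tofrac0 plusXD_tofrac coef0; split=> // i; rewrite coef0; exact: (subring0 HD).
- move=> _ _ [p [Dp Pp ->]] [q [Dq Pq ->]]; rewrite -tofracD plusXD_tofrac coefD.
  by split; [move=> i; rewrite coefD; apply: (subringD HD) | apply: PDD].
- move=> _ _ [p [Dp ->]] [q [Dq Pq ->]]; rewrite -tofracM plusXD_tofrac coef0M.
  by split; [move=> i; exact: coefM_dmodule (dmodule_subring HD) Dp Dq | apply: PM].
Qed.

(* Gauss: if a and b are the least indices with p`_a, q`_b outside P, then
   (p * q)`_(a + b) is p`_a * q`_b modulo P. *)
Lemma prime_extX P : prime_ideal D P -> prime_ideal (extX D) (extX P).
Proof.
case=> hP nP1 Pprime; split; first exact: ideal_extX.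
  by rewrite -tofrac1 extX_tofrac => /(_ 0%N); rewrite coef1.
move=> _ _ [p [Dp ->]] [q [Dq ->]]; rewrite -tofracM !extX_tofrac => Ppq.
apply: NNPP => /not_or_and [/not_all_ex_not nPp /not_all_ex_not nPq].
have [a [Ppa minPp]] := least_index nPp; have [b [Pqb minPq]] := least_index nPq.
have [PD _ _ PM] := hP.
suff : P (p`_a * q`_b) by case/(Pprime _ _ (Dp a) (Dq b)).
have := Ppq (a + b)%N; rewrite coefM.
have ab : (a < (a + b).+1)%N by rewrite ltnS leq_addr.
rewrite (bigD1 (Ordinal ab)) //= addKn => Psum.
rewrite -[_ * _](addrK (\sum_(k < (a + b).+1 | k != Ordinal ab) p`_k * q`_(a + b - k))).
apply: (dmoduleB HD (dmodule_ideal hP) Psum).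
apply: dmodule_sum (dmodule_ideal hP) _ => k nka.
have [ka|ak] := ltnP k a; first by rewrite mulrC; apply: PM => //; apply: NNPP; apply: minPp.
apply: PM => //; apply: NNPP; apply: minPq.
have {}ak : (a < k)%N.
  by rewrite ltn_neqAle ak andbT; apply: contra nka => /eqP e; apply/eqP/val_inj.
by rewrite ltn_subLR ?ltn_add2r // -ltnS.
Qed.

Lemma prime_plusXD P : prime_ideal D P -> prime_ideal (extX D) (plusXD P).
Proof.
case=> hP nP1 Pprime; split; first exact: ideal_plusXD.
  by case=> p [_ + /tofrac_inj e]; rewrite -e coef1.
move=> _ _ [p [Dp ->]] [q [Dq ->]]; rewrite -tofracM => /plusXD_tofrac [_].
by rewrite coef0M => /(Pprime _ _ (Dp 0%N) (Dq 0%N)) [Pp0|Pq0]; [left|right];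
  apply/plusXD_tofrac.
Qed.

Lemma contr_extX P : P 0 -> (forall x, P x -> D x) -> forall a, contr D (extX P) a <-> P a.
Proof.
move=> P0 PD a; rewrite /contr -/(cst a) extX_cst //.
by split=> [[]|Pa] //; split=> //; apply: PD.
Qed.

Lemma contr_plusXD P : P 0 -> (forall x, P x -> D x) ->
  forall a, contr D (plusXD P) a <-> P a.
Proof.
move=> P0 PD a; rewrite /contr -/(cst a) plusXD_cst //.
by split=> [[]|Pa] //; split=> //; apply: PD.
Qed.

Lemma extX_psubset (P P' : K -> Prop) : P 0 -> P' 0 ->
  psubset P P' -> psubset (extX P) (extX P').
Proof.
move=> P0 P'0 [PP' nP'P]; split=> [z | P'P]; first exact: extX_sub.
by apply: nP'P => a /(extX_cst a P'0) /P'P /(extX_cst a P0).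
Qed.

Lemma plusXD_psubset (P P' : K -> Prop) : P 0 -> P' 0 -> (forall x, P' x -> D x) ->
  psubset P P' -> psubset (plusXD P) (plusXD P').
Proof.
move=> P0 P'0 P'D [PP' nP'P].
have PD x : P x -> D x by move/PP'/P'D.
split=> [_ [p [Dp Pp0 ->]] | P'P]; first by apply/plusXD_tofrac; split=> //; apply: PP'.
by apply: nP'P => a /(plusXD_cst a P'0 P'D) /P'P /(plusXD_cst a P0 PD).
Qed.

Lemma extX_psubset_plusXD P : P 0 -> ~ P 1 -> (forall x, P x -> D x) ->
  psubset (extX P) (plusXD P).
Proof.
move=> P0 nP1 PD; split; first exact: extX_plusXD.
by move=> /(_ _ (X_plusXD P0)); apply: X_notin_extX.
Qed.

End PolynomialExtension.

Section ChainsOfSets.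
Variable T : Type.

Definition nested (F : (T -> Prop) -> Prop) :=
  forall A B, F A -> F B -> (forall x, A x -> B x) \/ (forall x, B x -> A x).

Lemma zorn_above (S : (T -> Prop) -> Prop) (A0 : T -> Prop) :
  S A0 ->
  (forall F, (forall A, F A -> S A) -> (exists A, F A) -> nested F ->
     S (fun x => exists A, F A /\ A x)) ->
  exists M, [/\ S M, forall x, A0 x -> M x &
    forall B, S B -> (forall x, M x -> B x) -> forall x, B x -> M x].
Proof.
move=> SA0 Sbig.
pose S' A := S (fun x => A x \/ A0 x).
have [A [S'A Amax]] : exists A, S' A /\ forall B, classical_sets.proper A B -> ~ S' B.
  apply: classical_sets.Zorn_bigcup => F FS' Ftot; rewrite /S'.
  have [[X FX]|F0] := classic (exists X, F X); last first.
    suff -> : (fun x => classical_sets.bigcup F id x \/ A0 x) = A0 by [].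
    by apply/boolp.predeqP => x; split=> [[[X FX _]|]|] //; [case: F0; exists X | right].
  pose F' B := exists X, F X /\ B = (fun x => X x \/ A0 x).
  suff -> : (fun x => classical_sets.bigcup F id x \/ A0 x) = (fun x => exists B, F' B /\ B x).
    apply: Sbig; first by move=> B [Y [FY ->]]; apply: FS'.
      by exists (fun x => X x \/ A0 x), X.
    move=> _ _ [Y [FY ->]] [Z [FZ ->]].
    by case: (Ftot Y Z FY FZ) => YZ; [left|right] => x [/YZ|]; by [left|right].
  apply/boolp.predeqP => x; split.
    case=> [[Y FY Yx]|A0x]; first by exists (fun x => Y x \/ A0 x); split; [exists Y|left].
    by exists (fun x => X x \/ A0 x); split; [exists X|right].
  by case=> _ [[Y [FY ->]] [Yx|A0x]]; [left; exists Y|right].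
exists (fun x => A x \/ A0 x); split=> // [x|B SB MB x Bx]; first by right.
have S'B : S' B.
  rewrite /S'; suff -> : (fun x => B x \/ A0 x) = B by [].
  by apply/boolp.predeqP => y; split=> [[// | A0y] | By]; [apply: MB; right | left].
have [AB|nAB] := classic (forall y, B y -> A y); first by left; apply: AB.
by case: (Amax B) => //; split=> // y Ay; apply: MB; left.
Qed.

Lemma nested_bound_seq (F : (T -> Prop) -> Prop) (x0 : T) (s : seq T) :
  (exists A, F A) -> nested F ->
  (forall i, (i < size s)%N -> exists A, F A /\ A (nth x0 s i)) ->
  exists A, F A /\ forall i, (i < size s)%N -> A (nth x0 s i).
Proof.
move=> [A0 FA0] Fnest; elim: s => [|y s IH] hs; first by exists A0.
have [A [FA sA]] := IH (fun i => hs i.+1).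
have [B [FB By]] := hs 0%N isT.
case: (Fnest A B FA FB) => [AB|BA].
  by exists B; split=> // -[|i] //= lti; apply: AB; apply: sA.
by exists A; split=> // -[|i] //= lti; [apply: BA | apply: sA].
Qed.

End ChainsOfSets.

Section QuasiPrimeChains.
Variable F : fieldType.
Implicit Types (R P Q A B : F -> Prop) (st : (F -> Prop) -> F -> Prop).
Local Notation nthP s i := (nth (fun _ => False) s i).

Lemma psubset_trans A B C : psubset A B -> Defs.subset B C -> psubset A C.
Proof. by move=> [AB nBA] BC; split=> [x /AB /BC | CA] //; apply: nBA => x /BC /CA. Qed.

Lemma psubset_neq A B : psubset A B -> A <> B.
Proof. by move=> [_ nBA] AB; apply: nBA; rewrite AB. Qed.

Lemma psubset_seq_lt (s : seq (F -> Prop)) n :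
  (forall i, (i < n)%N -> psubset (nthP s i) (nthP s i.+1)) ->
  forall i j, (i < j)%N -> (j <= n)%N -> psubset (nthP s i) (nthP s j).
Proof.
move=> incr i; elim=> // j IH; rewrite ltnS leq_eqVlt => /orP [/eqP -> | ij] jn.
  exact: incr.
by apply: psubset_trans (IH ij (ltnW jn)) _; case: (incr j jn).
Qed.

Lemma psubset_seq_inj (s : seq (F -> Prop)) n :
  (forall i, (i < n)%N -> psubset (nthP s i) (nthP s i.+1)) ->
  forall i j, (i <= n)%N -> (j <= n)%N -> nthP s i = nthP s j -> i = j.
Proof.
move=> incr i j iN jn; case: (ltngtP i j) => // [ij | ji] e.
  by case: (psubset_neq (psubset_seq_lt incr ij jn)).
by case: (psubset_neq (psubset_seq_lt incr ji iN)).
Qed.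

Definition seq_chain (s : seq (F -> Prop)) n A := exists2 i, (i <= n)%N & A = nthP s i.

Lemma qchain_seq R st (s : seq (F -> Prop)) n :
  (forall i, (i < n)%N -> psubset (nthP s i) (nthP s i.+1)) ->
  (forall i, (i <= n)%N -> quasi_prime R st (nthP s i)) ->
  qchain R st (nthP s 0) (nthP s n) (seq_chain s n).
Proof.
move=> incr qs.
have le_sub i j : (i <= j)%N -> (j <= n)%N -> Defs.subset (nthP s i) (nthP s j).
  rewrite leq_eqVlt => /orP [/eqP -> _ x // | ij jn].
  by case: (psubset_seq_lt incr ij jn).
split; [| by exists 0%N | by exists n |].
  by move=> _ [i iN ->]; split; [exact: qs | split; apply: le_sub].
move=> _ _ [i iN ->] [j jn ->].
by case: (leqP i j) => [ij | /ltnW ji]; [left; apply: le_sub | right; apply: le_sub].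
Qed.

Lemma chain_length_size_ge (C : (F -> Prop) -> Prop) n (s : seq (F -> Prop)) :
  chain_length C n -> (forall i, (i < size s)%N -> C (nthP s i)) ->
  (forall i j, (i < size s)%N -> (j < size s)%N -> nthP s i = nthP s j -> i = j) ->
  (size s <= n.+1)%N.
Proof.
move=> [l [_ _ Cl]] Cs s_inj.
have /boolp.choice [g gP] : forall i : 'I_(size s), exists k : 'I_n.+1, nthP s i = nthP l k.
  by move=> i; have [k kn ->] := proj1 (Cl _) (Cs i (ltn_ord i)); exists (Ordinal kn).
rewrite -[size s]card_ord -[n.+1]card_ord; apply: (leq_card g) => i j gij.
by apply/val_inj/s_inj; rewrite ?ltn_ord // !gP gij.
Qed.

Lemma chain_length_size_le (C : (F -> Prop) -> Prop) n (s : seq (F -> Prop)) :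
  chain_length C n -> (forall A, C A -> exists2 i, (i < size s)%N & A = nthP s i) ->
  (n.+1 <= size s)%N.
Proof.
move=> [l [_ incr Cl]] Cs.
have /boolp.choice [g gP] : forall k : 'I_n.+1, exists i : 'I_(size s), nthP l k = nthP s i.
  move=> k; have /Cs [i lti ->] : C (nthP l k) by apply/Cl; exists (nat_of_ord k).
  by exists (Ordinal lti).
rewrite -[size s]card_ord -[n.+1]card_ord; apply: (leq_card g) => k k' gkk'.
apply/val_inj/(psubset_seq_inj incr); [exact: ltn_ord k | exact: ltn_ord k' | by rewrite !gP gkk'].
Qed.

Lemma qchain_bigcup R st P Q (G : ((F -> Prop) -> Prop) -> Prop) :
  (forall C, G C -> qchain R st P Q C) -> (exists C, G C) -> nested G ->
  qchain R st P Q (fun A => exists C, G C /\ C A).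
Proof.
move=> Gchain [C0 GC0] Gnest; have [_ CP CQ _] := Gchain C0 GC0; split.
- by move=> A [C [GC CA]]; have [+ _ _ _] := Gchain C GC; apply.
- by exists C0.
- by exists C0.
- move=> A B [C [GC CA]] [C' [GC' C'B]].
  have [CC'|C'C] := Gnest C C' GC GC'.
    by have [_ _ _] := Gchain C' GC'; apply; first apply: CC'.
  by have [_ _ _] := Gchain C GC; apply=> //; apply: C'C.
Qed.

Lemma saturated_qchain_above R st P Q C0 : qchain R st P Q C0 ->
  exists M, saturated_qchain R st P Q M /\ forall A, C0 A -> M A.
Proof.
move=> C0chain; have [M [Mchain C0M Mmax]] := zorn_above C0chain (@qchain_bigcup R st P Q).
by exists M; split=> //; split=> // C' C'chain MC'; apply: Mmax.
Qed.

End QuasiPrimeChains.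

Section Semistar.
Variables (K : fieldType) (D : K -> Prop).
Hypothesis HD : is_subring D.
Variable st : (K -> Prop) -> K -> Prop.
Hypothesis Hst : semistar D st.
Local Notation span := (fg_span D).
Local Notation sf := (star_f D st).

Definition nonzero (E : K -> Prop) := exists y, E y /\ y != 0.

Lemma span_dmodule l : dmodule D (span l).
Proof.
split.
- exists (fun _ => 0); split; first by move=> _; exact: (subring0 HD).
  by rewrite big1 // => i _; rewrite mul0r.
- move=> _ _ [d [Dd ->]] [e [De ->]]; exists (fun i => d i + e i); split.
    by move=> i; apply: (subringD HD).
  by rewrite -big_split /=; apply: eq_bigr => i _; rewrite mulrDl.
- move=> c _ Dc [d [Dd ->]]; exists (fun i => c * d i); split.
    by move=> i; apply: (subringM HD).
  by rewrite mulr_sumr; apply: eq_bigr => i _; rewrite mulrA.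
Qed.

Lemma span_nth l i : (i < size l)%N -> span l l`_i.
Proof.
move=> li; exists (fun j => if j == i then 1 else 0); split.
  by move=> j; case: (j == i); [exact: (subring1 HD) | exact: (subring0 HD)].
rewrite (bigD1 (Ordinal li)) //= eqxx mul1r big1 ?addr0 // => j ji.
rewrite ifF ?mul0r //; apply: contraNF ji => /eqP e; apply/eqP/val_inj; exact: e.
Qed.

Lemma span_sub l (E : K -> Prop) : dmodule D E ->
  (forall i, (i < size l)%N -> E l`_i) -> forall x, span l x -> E x.
Proof.
move=> hE El _ [d [Dd ->]]; apply: (dmodule_sum (D := D)) => // i _.
by case: hE => _ _; apply=> //; apply: El.
Qed.

Lemma submod_of_dmodule E : dmodule D E -> nonzero E -> submod D E.
Proof. by case=> E0 ED EM [y [Ey y0]]; split=> //; exists y. Qed.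

Lemma submod_subring : submod D D.
Proof.
apply: submod_of_dmodule; first exact: dmodule_subring.
by exists 1; split; [exact: (subring1 HD) | exact: oner_neq0].
Qed.

Lemma submod_span l : nonzero (span l) -> submod D (span l).
Proof. by apply: submod_of_dmodule; apply: span_dmodule. Qed.

Lemma submod_st E : submod D E -> submod D (st E).
Proof. by case: Hst => + _ _ _ _; apply. Qed.

Lemma sub_st E : submod D E -> forall x, E x -> st E x.
Proof. by case: Hst => _ _ _ + _; apply. Qed.

Lemma st_mono E G : submod D E -> submod D G -> (forall x, E x -> G x) ->
  forall x, st E x -> st G x.
Proof. by case: Hst => _ _ + _ _; apply. Qed.

Lemma st_absorb E G : submod D E -> submod D G -> (forall x, E x -> st G x) ->
  forall x, st E x -> st G x.
Proof.
move=> sE sG EG x Ex; have [_ _ _ _ st_idem] := Hst; apply/(st_idem G sG).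
exact: st_mono sE (submod_st sG) EG x Ex.
Qed.

Lemma st_subring_sub E : submod D E -> st E 1 -> forall y, st D y -> st E y.
Proof.
move=> sE E1; apply: (st_absorb submod_subring sE) => d Dd.
by rewrite -[d]mulr1; have [_ _ + _] := submod_st sE; apply.
Qed.

Lemma ideal_sub_star_f I : ideal D I -> nonzero I -> forall x, I x -> sf I x.
Proof.
move=> hI [y [Iy y0]] x Ix.
pose g := if x == 0 then y else x.
have g0 : g != 0 by rewrite /g; case: ifP => // /negbT.
have gI : I g by rewrite /g; case: ifP.
have gspan : span [:: g] g := span_nth (l := [:: g]) (i := 0) isT.
have nzg : nonzero (span [:: g]) by exists g.
exists [:: g]; split=> //; split; first by apply: span_sub (dmodule_ideal hI) _ => -[|i].
have [-> | x0] := eqVneq x 0; first by have [] := submod_st (submod_span nzg).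
by apply: sub_st (submod_span nzg) _ _; move: gspan; rewrite /g (negPf x0).
Qed.

Lemma star_f_bigcup (G : (K -> Prop) -> Prop) x :
  (forall A, G A -> dmodule D A) -> (exists A, G A) -> nested G ->
  sf (fun y => exists A, G A /\ A y) x -> exists A, G A /\ sf A x.
Proof.
move=> Gmod exG Gnest [l [nzl [lG stx]]].
have [A [GA lA]] := nested_bound_seq (x0 := 0) exG Gnest (fun i li => lG _ (span_nth li)).
by exists A; split=> //; exists l; split=> //; split=> // y; apply: span_sub (Gmod A GA) lA y.
Qed.

End Semistar.

Section QuasiMaximal.
Variables (K : fieldType) (D : K -> Prop).
Hypothesis HD : is_subring D.
Variable st : (K -> Prop) -> K -> Prop.
Hypothesis Hst : semistar D st.
Local Notation span := (fg_span D).
Local Notation sf := (star_f D st).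

Definition adjoin (M : K -> Prop) (x : K) : K -> Prop :=
  fun y => exists m d, [/\ M m, D d & y = m + x * d].

Lemma ideal_adjoin M x : ideal D M -> D x -> ideal D (adjoin M x).
Proof.
move=> [MD M0 MDD MM] Dx; split.
- move=> _ [m [d [Mm Dd ->]]].
  by apply: (subringD HD); [apply: MD | apply: (subringM HD)].
- by exists 0, 0; split=> //; [exact: (subring0 HD) | rewrite mulr0 addr0].
- move=> _ _ [m [d [Mm Dd ->]]] [m' [d' [Mm' Dd' ->]]].
  exists (m + m'), (d + d'); split; [exact: MDD | exact: (subringD HD) | ].
  by rewrite mulrDr addrACA.
- move=> c _ Dc [m [d [Mm Dd ->]]]; exists (c * m), (c * d); split.
  + exact: MM.
  + exact: (subringM HD).
  + by rewrite mulrDr mulrCA.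
Qed.

Lemma sub_adjoin M x y : M y -> adjoin M x y.
Proof. by move=> My; exists y, 0; split=> //; [exact: (subring0 HD) | rewrite mulr0 addr0]. Qed.

Lemma adjoin_self M x : M 0 -> adjoin M x x.
Proof. by exists 0, 1; split=> //; [exact: (subring1 HD) | rewrite add0r mulr1]. Qed.

Lemma adjoin_seq_decomp M x (l : seq K) :
  (forall i, (i < size l)%N -> adjoin M x l`_i) ->
  exists h : seq K, (forall j, (j < size h)%N -> M h`_j) /\
    forall i, (i < size l)%N -> exists j d, [/\ (j < size h)%N, D d & l`_i = h`_j + x * d].
Proof.
elim: l => [|y l IH] adj_l; first by exists [::].
have [h [Mh lh]] := IH (fun i => adj_l i.+1).
have /= [m [d [Mm Dd ey]]] := adj_l 0%N isT.
exists (m :: h); split=> [[|j] //= /Mh // | [|i] /= li]; first by exists 0%N, d.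
by have [j [d' [hj Dd' e]]] := lh i li; exists j.+1, d'.
Qed.

(* Write the generators of the finite module witnessing 1 as h_j + x d_j with
   h_j in M; as x is in the star of a finite g inside M, 1 is then in the star
   of the span of h ++ g. *)
Lemma star_f1_adjoin M x : ideal D M -> sf M x -> sf (adjoin M x) 1 -> sf M 1.
Proof.
move=> hM [g [nzg [gM stgx]]] [l [nzl [l_adj stl1]]].
have [h [Mh lh]] := adjoin_seq_decomp (fun i li => l_adj _ (span_nth HD li)).
pose H := h ++ g.
have gH : forall y, span g y -> span H y.
  apply: (span_sub (span_dmodule HD H)) => j gj.
  have -> : g`_j = H`_(size h + j) by rewrite /H nth_cat ltnNge leq_addr /= addKn.
  by apply: (span_nth HD); rewrite /H size_cat ltn_add2l.
have nzH : nonzero (span H) by case: nzg => y [gy y0]; exists y; split=> //; apply: gH.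
have sH := submod_span HD nzH.
have HM : forall y, span H y -> M y.
  apply: (span_sub (dmodule_ideal hM)) => j; rewrite /H size_cat nth_cat => lj.
  case: ltnP => [/Mh // | hj]; apply: gM; apply: (span_nth HD).
  by rewrite ltn_subLR.
exists H; split; [exact: nzH | split; first exact: HM].
apply: (st_absorb Hst (submod_span HD nzl) sH _ stl1).
apply: (span_sub (dmodule_submod (submod_st Hst sH))) => i li.
have [j [d [hj Dd ->]]] := lh i li.
have [_ stD stM _] := submod_st Hst sH.
apply: stD.
  apply: (sub_st Hst sH); have -> : h`_j = H`_j by rewrite /H nth_cat hj.
  by apply: (span_nth HD); rewrite /H size_cat ltn_addr.
by rewrite mulrC; apply: stM => //; apply: (st_mono Hst (submod_span HD nzg) sH gH).
Qed.

Lemma quasi_ideal_of_maximal M : ideal D M -> nonzero M -> ~ sf M 1 ->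
  (forall B, ideal D B -> (forall x, M x -> B x) -> ~ sf B 1 -> forall x, B x -> M x) ->
  quasi_ideal D sf M.
Proof.
move=> hM nzM nM1 Mmax; split=> // x; split=> [[Mx_sf Dx] | Mx].
  apply: (Mmax (adjoin M x)) => //.
  - exact: ideal_adjoin.
  - exact: sub_adjoin.
  - by move/(star_f1_adjoin hM Mx_sf).
  - by apply: adjoin_self; case: hM.
by split; [apply: (ideal_sub_star_f HD Hst) | case: hM => + _ _ _; apply].
Qed.

Lemma ideal_bigcup (G : (K -> Prop) -> Prop) :
  (forall A, G A -> ideal D A) -> (exists A, G A) -> nested G ->
  ideal D (fun y => exists A, G A /\ A y).
Proof.
move=> Gideal [A0 GA0] Gnest; split.
- by move=> x [A [GA Ax]]; have [+ _ _ _] := Gideal A GA; apply.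
- by exists A0; split=> //; have [_ + _ _] := Gideal A0 GA0.
- move=> x y [A [GA Ax]] [B [GB By]]; have [AB|BA] := Gnest A B GA GB.
    by exists B; split=> //; have [_ _ + _] := Gideal B GB; apply=> //; apply: AB.
  by exists A; split=> //; have [_ _ + _] := Gideal A GA; apply=> //; apply: BA.
- move=> d x Dd [A [GA Ax]]; exists A; split=> //.
  by have [_ _ _] := Gideal A GA; apply.
Qed.

Lemma quasi_max_above J : ideal D J -> nonzero J -> ~ sf J 1 ->
  exists M, quasi_max D sf M /\ forall x, J x -> M x.
Proof.
move=> hJ nzJ nJ1.
pose S A := [/\ ideal D A, forall x, J x -> A x & ~ sf A 1].
have [M [[hM JM nM1] _ Mmax]] : exists M, [/\ S M, forall x, J x -> M x &
    forall B, S B -> (forall x, M x -> B x) -> forall x, B x -> M x].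
  apply: zorn_above; first by split.
  move=> G GS exG Gnest; split.
  - by apply: ideal_bigcup => // A /GS [].
  - by case: exG => A GA x Jx; exists A; split=> //; have [_ + _] := GS A GA; apply.
  - have Gmod A : G A -> dmodule D A by case/GS=> /dmodule_ideal.
    by case/(star_f_bigcup HD Gmod exG Gnest) => A [GA]; have [_ _] := GS A GA.
have nzM : nonzero M by case: nzJ => y [Jy y0]; exists y; split=> //; apply: JM.
have qM : quasi_ideal D sf M.
  apply: quasi_ideal_of_maximal => // B hB MB nB1; apply: Mmax => //.
  by split=> // x /JM /MB.
exists M; split=> //; split=> // [M1 | I [hI _ qI] nI1 MI].
  by apply: nM1; apply: (ideal_sub_star_f HD Hst).
apply: Mmax => //; split=> // [x /JM /MI // | I1].
by apply: nI1; apply/qI; split=> //; exact: (subring1 HD).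
Qed.

End QuasiMaximal.

Section Contraction.
Variables (K : fieldType) (D : K -> Prop).
Hypothesis HD : is_subring D.
Variable st : (K -> Prop) -> K -> Prop.
Hypothesis Hst : semistar D st.
Local Notation KX := {fraction {poly K}}.
Local Notation span := (fg_span D).

Lemma Sset1 op : Sset D op 1.
Proof.
split=> [i | Q [[_ nQ1 _] _] /(_ 0%N)]; last by rewrite coef1.
by rewrite coef1; case: (i == 0)%N; [exact: extX1 | exact: extX0].
Qed.

Lemma quasi_ideal_starX op (N : KX -> Prop) :
  prime_ideal (extX D) N -> (exists z, N z /\ z != 0) -> Theta D op N ->
  quasi_ideal (extX D) (starX D op) N.
Proof.
move=> pN nzN thN; have [hN _ Nprime] := pN; have [ND N0 _ _] := hN.
split=> // z; split=> [[[g [[gD gQ] gz]] Dz] | Nz].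
  have /not_all_ex_not [i nNgi] := gQ N thN.
  by case: (Nprime _ _ (gD i) Dz (gz i)).
split; last exact: ND.
exists 1; split; first exact: Sset1.
by move=> i; rewrite coef1 mulr_natl; case: (i == 0)%N; [rewrite mulr1n | rewrite mulr0n].
Qed.

Lemma prime_contr (Q : KX -> Prop) : prime_ideal (extX D) Q -> prime_ideal D (contr D Q).
Proof.
move=> [[_ Q0 QD QM] nQ1 Qprime]; split; first split.
- by move=> a [].
- by split; [exact: (subring0 HD) | rewrite /= tofrac0].
- move=> a b [Da Qa] [Db Qb]; split; first exact: (subringD HD).
  by rewrite polyCD tofracD; apply: QD.
- move=> d a Dd [Da Qa]; split; first exact: (subringM HD).
  by rewrite polyCM tofracM; apply: QM => //; apply: (extX_cstD HD).
- by case=> _; rewrite tofrac1.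
- move=> a b Da Db [_]; rewrite polyCM tofracM.
  by case/(Qprime _ _ (extX_cstD HD Da) (extX_cstD HD Db)); [left | right].
Qed.

Lemma ideal_colon (I : K -> Prop) x : ideal D I -> ideal D (fun s => D s /\ I (s * x)).
Proof.
move=> [ID I0 IDD IM]; split.
- by move=> s [].
- by split; [exact: (subring0 HD) | rewrite mul0r].
- move=> s t [Ds Is] [Dt It]; split; first exact: (subringD HD).
  by rewrite mulrDl; apply: IDD.
- move=> d s Dd [Ds Is]; split; first exact: (subringM HD).
  by rewrite -mulrA; apply: IM.
Qed.

Lemma st1_notin_quasi P l : quasi_ideal D (tilde D st) P -> ~ P 1 ->
  nonzero (span l) -> (forall x, span l x -> P x) -> ~ st (span l) 1.
Proof.
move=> [[PD _ _ _] _ qP] nP1 nzl lP stl1; apply: nP1; apply/qP; split; last exact: (subring1 HD).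
move=> M [[_ _ qM] nM1 _].
have [s [ls nMs]] : exists s, span l s /\ ~ M s.
  apply: NNPP => nls; apply: nM1; apply/qM; split; last exact: (subring1 HD).
  exists l; split=> //; split=> // y ly; apply: NNPP => nMy; apply: nls; by exists y.
by exists s; split; [apply: PD; apply: lP | | rewrite mulr1; apply: lP].
Qed.

Lemma Theta_contr_sub P (Q : KX -> Prop) : quasi_ideal D (tilde D st) P -> ~ P 1 ->
  prime_ideal (extX D) Q -> (forall a, contr D Q a -> P a) -> Theta D st Q.
Proof.
move=> qP nP1 pQ QP; split=> //; right; split.
  move=> x [l [nzl [lQ stx]]].
  by apply: (st_mono Hst (submod_span HD nzl) (submod_subring HD) _ stx) => y /lQ [].
move=> /(_ 1 (sub_st Hst (submod_subring HD) (subring1 HD))) [l [nzl [lQ stl1]]].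
by apply: (st1_notin_quasi qP nP1 nzl) stl1 => y /lQ /QP.
Qed.

Lemma Theta_tilde_contr_sub P (Q : KX -> Prop) : quasi_ideal D (tilde D st) P -> ~ P 1 ->
  prime_ideal (extX D) Q -> (forall a, contr D Q a -> P a) -> Theta D (tilde D st) Q.
Proof.
move=> [[PD _ _ _] _ qP] nP1 pQ QP; split=> //; right; split.
  move=> x [l [nzl [lQ tx]]] M qM; have [s [Ds nMs lsx]] := tx M qM.
  by exists s; split=> //; case: (lQ _ lsx).
have tD1 : tilde D st D 1.
  by move=> M [_ nM1 _]; exists 1; split=> //; rewrite ?mulr1; exact: (subring1 HD).
move=> /(_ 1 tD1) [l [nzl [lQ t1]]]; apply: nP1; apply/qP; split; last exact: (subring1 HD).
move=> M qM; have [s [Ds nMs ls]] := t1 M qM.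
by exists s; split=> //; apply: QP; apply: lQ.
Qed.

(* Its content has star containing 1, which rules out every Q[Y], Q in Theta. *)
Lemma Sset_poly_span l : (forall i, (i < size l)%N -> D l`_i) -> nonzero (span l) ->
  st (span l) 1 -> Sset D st (\poly_(i < size l) cst l`_i).
Proof.
move=> lD nzl stl1; split=> [i | Q [pQ thQ] Ql].
  rewrite coef_poly; case: ltnP => [li | _]; last exact: (extX0 HD).
  by apply: (extX_cstD HD); apply: lD.
have [cQ _ _] := prime_contr pQ.
have lQ : forall y, span l y -> contr D Q y.
  apply: (span_sub (dmodule_ideal cQ)) => i li; split; first exact: lD.
  by move: (Ql i); rewrite coef_poly li.
case: thQ => [Q0 | [_ nsub]].
  by case: nzl => y [ly]; rewrite (Q0 y (lQ y ly)) eqxx.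
apply: nsub => y Dy; exists l; split; [exact: nzl | split; first exact: lQ].
exact: (st_subring_sub HD Hst (submod_span HD nzl) stl1).
Qed.

(* With J = (contr N : x), either J lies in a quasi-star_f-maximal ideal, which
   x in the tilde closure forbids, or a finite part of J yields an element of S
   multiplying x into N. *)
Lemma quasi_prime_contr (N : KX -> Prop) : quasi_prime (extX D) (starX D st) N ->
  nonzero (contr D N) -> quasi_prime D (tilde D st) (contr D N).
Proof.
move=> [[hN _ qN] pN] nzc; have pc := prime_contr pN; have [hc _ _] := pc.
have [_ N0 _ _] := hN.
split=> //; split=> // x; split=> [[tx Dx] | cx]; last first.
  split; last by case: cx.
  by move=> M [_ nM1 _]; exists 1; split=> //; [exact: (subring1 HD) | rewrite mul1r].
pose J s := D s /\ contr D N (s * x).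
have hJ : ideal D J := ideal_colon x hc.
have nzJ : nonzero J.
  case: nzc => y [cy y0]; exists y; split=> //; split; first by case: cy.
  by rewrite mulrC; have [_ _ _] := hc; apply.
have [[l [nzl [lJ stl1]]] | nJ1] := classic (star_f D st J 1); last first.
  have [M [qM JM]] := quasi_max_above HD Hst hJ nzJ nJ1.
  by have [s [Ds nMs cs]] := tx M qM; case: nMs; apply: JM.
have lJ' i : (i < size l)%N -> J l`_i by move=> li; apply: lJ; apply: (span_nth HD).
suff Nx : N (cst x) by split.
apply/qN; split; last exact: (extX_cstD HD).
exists (\poly_(i < size l) cst l`_i); split.
  by apply: Sset_poly_span => // i /lJ' [].
move=> i; rewrite coef_poly; case: ltnP => [li | _]; last by rewrite mul0r.
by rewrite -cstM; case: (lJ' i li) => _ [].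
Qed.

End Contraction.

Section QuasiPrimesOfPolynomials.
Variables (K : fieldType) (D : K -> Prop).
Hypothesis HD : is_subring D.
Variable st : (K -> Prop) -> K -> Prop.
Hypothesis Hst : semistar D st.
Local Notation KX := {fraction {poly K}}.
Implicit Types P : K -> Prop.

Lemma quasi_prime_facts P : quasi_prime D (tilde D st) P ->
  [/\ ideal D P, ~ P 1, P 0, forall x, P x -> D x & nonzero P].
Proof. by move=> [[hP nzP _] [_ nP1 _]]; have [PD P0 _ _] := hP; split. Qed.

Lemma quasi_prime_starX P (N : KX -> Prop) : quasi_prime D (tilde D st) P ->
  prime_ideal (extX D) N -> (exists z, N z /\ z != 0) ->
  (forall a, contr D N a -> P a) -> quasi_prime (extX D) (starX D st) N.
Proof.
move=> [qP [_ nP1 _]] pN nzN NP; split=> //; apply: (quasi_ideal_starX HD) => //.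
exact: (Theta_contr_sub HD Hst qP nP1).
Qed.

Lemma quasi_prime_extX P : quasi_prime D (tilde D st) P ->
  quasi_prime (extX D) (starX D st) (extX P).
Proof.
move=> qP; have [_ _ P0 PD [y [Py y0]]] := quasi_prime_facts qP.
apply: (quasi_prime_starX qP); first by apply: (prime_extX HD); case: qP.
  by exists (cst y); split; [apply/extX_cst | apply: cst_neq0].
by move=> a /(contr_extX P0 PD).
Qed.

Lemma quasi_prime_plusXD P : quasi_prime D (tilde D st) P ->
  quasi_prime (extX D) (starX D st) (plusXD D P).
Proof.
move=> qP; have [_ _ P0 PD _] := quasi_prime_facts qP.
apply: (quasi_prime_starX qP); first by apply: (prime_plusXD HD); case: qP.
  by exists (tofrac 'X); split; [apply: (X_plusXD HD) | apply: tofracX_neq0].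
by move=> a /(contr_plusXD HD P0 PD).
Qed.

Lemma quasi_prime_extX_tilde P : quasi_prime D (tilde D st) P ->
  quasi_prime (extX D) (starX D (tilde D st)) (extX P).
Proof.
move=> qP; have [_ nP1 P0 PD [y [Py y0]]] := quasi_prime_facts qP.
have pPX : prime_ideal (extX D) (extX P) by apply: (prime_extX HD); case: qP.
split=> //; apply: (quasi_ideal_starX HD) => //.
  by exists (cst y); split; [apply/extX_cst | apply: cst_neq0].
apply: (Theta_tilde_contr_sub HD (P := P)) => //; first by case: qP.
by move=> a /(contr_extX P0 PD).
Qed.

(* If X is not in N, then N is inside P[X]: the constant term of each p in N
   is in P, so (p - p(0)) / X is again in N and of smaller size. *)
Lemma between_extX_plusXD P (N : KX -> Prop) : quasi_prime D (tilde D st) P ->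
  prime_ideal (extX D) N -> Defs.subset (extX P) N -> Defs.subset N (plusXD D P) ->
  Defs.subset N (extX P) \/ Defs.subset (plusXD D P) N.
Proof.
move=> qP [hN _ Nprime] PN NP; have [_ _ P0 PD _] := quasi_prime_facts qP.
have [_ _ NDD NM] := hN.
have [NX | nNX] := classic (N (tofrac 'X)).
  right=> _ [p [Dp Pp0 ->]]; rewrite poly_decompX; apply: NDD.
    by apply: PN; apply/extX_cst.
  by apply: NM => //; apply/extX_tofrac; apply: coef_in_drop.
left; suff NP' n (p : {poly K}) : (size p <= n)%N -> coef_in D p -> N (tofrac p) -> coef_in P p.
  move=> z Np; have [p [Dp _ ep]] := NP _ Np; rewrite ep in Np *.
  by apply/extX_tofrac; apply: (NP' (size p)).
elim: n p => [|n IH] p sp Dp Np.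
  by move: sp; rewrite leqn0 size_poly_eq0 => /eqP -> i; rewrite coef0.
have [_ Pp0] := proj1 (plusXD_tofrac _ _ _) (NP _ Np).
have NdropX : N (tofrac (drop_poly 1 p) * tofrac 'X).
  have -> : tofrac (drop_poly 1 p) * tofrac 'X = tofrac p - cst p`_0.
    by rewrite [tofrac p]poly_decompX addrC addKr.
  by apply: (idealB_extX HD hN) => //; apply: PN; apply/extX_cst.
have Ndrop : N (tofrac (drop_poly 1 p)).
  case: (Nprime _ _ _ _ NdropX) => //; apply/extX_tofrac.
    exact: coef_in_drop.
  exact: (coef_inX HD).
have Pdrop : coef_in P (drop_poly 1 p).
  by apply: IH (coef_in_drop Dp) Ndrop; rewrite size_drop_poly leq_subLR add1n.
by case=> [|i] //; move: (Pdrop i); rewrite coef_drop_poly addn1.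
Qed.

End QuasiPrimesOfPolynomials.

Section AdjacentQuasiPrimes.
Variables (K : fieldType) (D : K -> Prop).
Hypothesis HD : is_subring D.
Variable st : (K -> Prop) -> K -> Prop.
Hypothesis Hst : semistar D st.
Variables P1 P2 : K -> Prop.
Hypothesis qP1 : quasi_prime D (tilde D st) P1.
Hypothesis qP2 : quasi_prime D (tilde D st) P2.
Hypothesis P12 : psubset P1 P2.
Hypothesis P12_adj :
  ~ exists P, [/\ quasi_prime D (tilde D st) P, psubset P1 P & psubset P P2].
Local Notation KX := {fraction {poly K}}.
Local Notation nthP s i := (nth (fun _ => False) s i).

(* N is determined by its contraction, which lies between P1 and P2. *)
Lemma between_plusXD (N : KX -> Prop) : quasi_prime (extX D) (starX D st) N ->
  Defs.subset (plusXD D P1) N -> Defs.subset N (plusXD D P2) ->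
  Defs.subset N (plusXD D P1) \/ Defs.subset (plusXD D P2) N.
Proof.
move=> qN P1N NP2; have [[hN _ _] _] := qN; have [_ _ NDD NM] := hN.
have [_ _ P10 P1D [y [P1y y0]]] := quasi_prime_facts qP1.
have [_ _ P20 P2D _] := quasi_prime_facts qP2.
pose c := contr D N.
have P1c a : P1 a -> c a by move=> P1a; split; [apply: P1D | apply/P1N/plusXD_cst].
have cP2 a : c a -> P2 a by case=> _ /NP2 /(plusXD_cst HD a P20 P2D).
have qc : quasi_prime D (tilde D st) c.
  by apply: (quasi_prime_contr HD Hst qN); exists y; split=> //; apply: P1c.
have [cP1 | P2c] : Defs.subset c P1 \/ Defs.subset P2 c.
  apply: NNPP => /not_or_and [ncP1 nP2c]; apply: P12_adj.
  by exists c; split=> //; split.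
- left=> z Np; have [p [Dp _ ep]] := NP2 _ Np; rewrite ep in Np *.
  have NdropX : N (tofrac (drop_poly 1 p) * tofrac 'X).
    apply: P1N; rewrite -tofracM; apply/plusXD_tofrac; rewrite coefMX.
    by split=> //; apply: (coef_in_mulX HD); apply: coef_in_drop.
  have Np0 : N (cst p`_0).
    have -> : cst p`_0 = tofrac p - tofrac (drop_poly 1 p) * tofrac 'X.
      by rewrite [tofrac p]poly_decompX addrK.
    exact: (idealB_extX HD hN).
  by apply/plusXD_tofrac; split=> //; apply: cP1; split.
- right=> _ [p [Dp P2p0 ->]]; rewrite poly_decompX; apply: NDD; first by case: (P2c _ P2p0).
  by apply: NM; [apply/extX_tofrac; apply: coef_in_drop | apply: P1N; apply: (X_plusXD HD)].
Qed.

Definition chain3 := [:: extX P1; plusXD D P1; plusXD D P2].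

Lemma saturated_chain3 :
  saturated_qchain (extX D) (starX D st) (extX P1) (plusXD D P2) (seq_chain chain3 2).
Proof.
have [_ nP11 P10 P1D _] := quasi_prime_facts qP1.
have [_ _ P20 P2D _] := quasi_prime_facts qP2.
have incr i : (i < 2)%N -> psubset (nthP chain3 i) (nthP chain3 i.+1).
  case: i => [|[|]] //= _; first exact: (extX_psubset_plusXD HD).
  exact: (plusXD_psubset HD).
have qchain3 i : (i <= 2)%N -> quasi_prime (extX D) (starX D st) (nthP chain3 i).
  case: i => [|[|[|]]] //= _; first exact: quasi_prime_extX.
    exact: quasi_prime_plusXD.
  exact: quasi_prime_plusXD.
split; first exact: qchain_seq incr qchain3.
move=> C [Cq _ _ Cnest] chainC A CA; have [qA [P1A AP2]] := Cq A CA.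
have CX1 : C (plusXD D P1) by apply: chainC; exists 1%N.
have [AX1 | X1A] := Cnest A _ CA CX1.
  case: (between_extX_plusXD HD qP1 (proj2 qA) P1A AX1) => [AP1 | X1A].
    by exists 0%N => //; apply/boolp.predeqP => z; split=> [/AP1 | /P1A].
  by exists 1%N => //; apply/boolp.predeqP => z; split=> [/AX1 | /X1A].
case: (between_plusXD qA X1A AP2) => [AX1 | X2A].
  by exists 1%N => //; apply/boolp.predeqP => z; split=> [/AX1 | /X1A].
by exists 2%N => //; apply/boolp.predeqP => z; split=> [/AP2 | /X2A].
Qed.

Lemma no_quasi_prime_between (Q : KX -> Prop) :
  catenary (extX D) (starX D st) ->
  quasi_prime (extX D) (starX D (tilde D st)) Q ->
  psubset (extX P1) Q -> psubset Q (extX P2) -> False.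
Proof.
move=> Hcat [[hQ nzQ _] pQ] P1Q QP2.
have [_ _ P10 _ _] := quasi_prime_facts qP1.
have [_ nP21 P20 P2D _] := quasi_prime_facts qP2.
have qQ : quasi_prime (extX D) (starX D st) Q.
  apply: (quasi_prime_starX HD Hst qP2) => // a [_ Qa].
  by apply/(extX_cst a P20); case: QP2 => + _; apply.
pose chain4 := [:: extX P1; Q; extX P2; plusXD D P2].
have incr i : (i < 3)%N -> psubset (nthP chain4 i) (nthP chain4 i.+1).
  case: i => [|[|[|]]] //= _; exact: (extX_psubset_plusXD HD).
have qchain4 i : (i <= 3)%N -> quasi_prime (extX D) (starX D st) (nthP chain4 i).
  case: i => [|[|[|[|]]]] //= _; first exact: quasi_prime_extX.
    exact: quasi_prime_extX.
  exact: quasi_prime_plusXD.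
have [M [Msat chain4M]] := saturated_qchain_above (qchain_seq incr qchain4).
have P1X2 := psubset_seq_lt incr (i := 0) (j := 3) isT isT.
have [n [Mn chain3n]] := Hcat (extX P1) (plusXD D P2) (quasi_prime_extX HD Hst qP1)
  (quasi_prime_plusXD HD Hst qP2) P1X2 _ _ Msat saturated_chain3.
have := chain_length_size_ge Mn (s := chain4) (fun i li => chain4M _ (ex_intro2 _ _ i li erefl))
  (fun i j li lj => psubset_seq_inj incr li lj).
have := chain_length_size_le chain3n (s := chain3) (fun A CA => CA).
by move=> le3 /leq_trans /(_ le3).
Qed.

End AdjacentQuasiPrimes.

Theorem mainTheorem9 (K : fieldType) (D : K -> Prop)
    (st : (K -> Prop) -> (K -> Prop)) :
  is_subring D -> quotient_field_of D -> semistar D st ->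
  catenary (extX D) (starX D st) ->
  strong_S_domain D (tilde D st).
Proof.
move=> HD _ Hst Hcat P1 P2 [qP1 qP2 P12 P12_adj].
have [_ _ P10 _ _] := quasi_prime_facts qP1; have [_ _ P20 _ _] := quasi_prime_facts qP2.
split; [exact: quasi_prime_extX_tilde | exact: quasi_prime_extX_tilde | exact: extX_psubset |].
by case=> Q [qQ P1Q QP2]; apply: (no_quasi_prime_between HD Hst qP1 qP2 P12 P12_adj Hcat qQ).
Qed.
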